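(* Let $(G,k)$ be an instance of PITVD and let $P=(v_1,v_2,\dots,v_\ell)$ be a degree-2-tail in $G$ with $\ell\ge3$ vertices, and let $Z=\{v_3,v_4,\dots,v_\ell\}$. Then $(G,k)$ is a yes-instance of PITVD if and only if $(G-Z,k)$ is a yes-instance of PITVD.
   Context: PITVD: the input is an undirected multigraph $G$ (no self-loops) and an integer $k$; the question is whether there exists $X\subseteq V(G)$ with $|X|\le k$ such that $G-X$ is a simple graph and every connected component of $G-X$ is a proper interval graph or a tree. A path $(v_1,\dots,v_\ell)$ (distinct vertices, consecutive ones adjacent) is a degree-2-path if every internal vertex has degree exactly $2$ in $G$; it is a degree-2-tail if moreover $d_G(v_1)>2$ and $d_G(v_\ell)=1$. *)

From Stdlib Require Import Reals.
From mathcomp Require Import all_boot.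
Set Implicit Arguments. Unset Strict Implicit. Unset Printing Implicit Defensive.

(* An undirected multigraph without self-loops on a finite vertex type V:
   mult u v = number of parallel edges between u and v. *)
Record multigraph (V : finType) := Multigraph {
  mult : V -> V -> nat;
  mult_sym : forall u v, mult u v = mult v u;
  mult_loopless : forall v, mult v v = 0
}.

Section Defs.
Variable V : finType.
Implicit Type G : multigraph V.

Definition deg G (v : V) : nat := \sum_(u : V) mult G v u.

Definition adj_in G (S : {set V}) : rel V :=
  fun u v => [&& u \in S, v \in S & 0 < mult G u v].

Definition simple_in G (S : {set V}) : Prop :=
  forall u v, u \in S -> v \in S -> mult G u v <= 1.

Definition component G (S : {set V}) (x : V) : {set V} :=
  [set y | connect (adj_in G S) x y].

(* the graph (C, e) is a proper interval graph: it has an interval model on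
   the real line with closed intervals [l v, r v] such that no interval
   properly contains another *)
Definition proper_interval (C : {set V}) (e : rel V) : Prop :=
  exists l r : V -> R,
    (forall v, v \in C -> Rle (l v) (r v)) /\
    (forall u v, u \in C -> v \in C -> u != v ->
       (e u v <-> (Rle (l u) (r v) /\ Rle (l v) (r u)))) /\
    (forall u v, u \in C -> v \in C ->
       ~ (Rle (l v) (l u) /\ Rle (r u) (r v) /\ (Rlt (l v) (l u) \/ Rlt (r u) (r v)))).

(* the connected graph (C, e) is a tree: it contains no cycle *)
Definition acyclic_on (C : {set V}) (e : rel V) : Prop :=
  ~ exists c : seq V, [/\ all (fun x => x \in C) c, uniq c, 3 <= size c & cycle e c].

Definition good_in G (S : {set V}) : Prop :=
  simple_in G S /\
  forall x, x \in S ->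
    proper_interval (component G S x) (adj_in G S) \/
    acyclic_on (component G S x) (adj_in G S).

Definition pitvd_yes G (S : {set V}) (k : nat) : Prop :=
  exists X : {set V}, [/\ X \subset S, #|X| <= k & good_in G (S :\: X)].

Definition deg2_tail G (p : seq V) : Prop :=
  exists v1 vl (mid : seq V),
    p = v1 :: rcons mid vl /\
    uniq p /\
    path (fun u v => 0 < mult G u v) v1 (rcons mid vl) /\
    all (fun v => deg G v == 2) mid /\
    2 < deg G v1 /\ deg G vl = 1.
End Defs.

From Stdlib Require Import Reals Lra.
From mathcomp Require Import all_boot zify.
Set Implicit Arguments. Unset Strict Implicit. Unset Printing Implicit Defensive.

(* Deleting vertices preserves the property, so a solution X for G yields the
   solution X minus Z for G - Z.  Conversely, let X be a solution for G - Z and K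
   a component of G - X meeting Z.  Vertices of the tail lie on no cycle, and K
   minus Z lies in the component C of v2 in G - Z - X, where v2 has v1 as its only
   neighbour.  If C is a tree, so is K.  If C has a proper interval model, mirror
   it so that the interval of v2 starts left of that of v1: then the left end of
   v2 lies in no other interval, and after pushing everything to its left further
   left, v3, ..., vl fit into the gap as a chain of unit intervals.  If both
   intervals start at the same point they coincide, which forces C = {v1, v2},
   and K is a path. *)

Section Paths.
Variable V : finType.

Lemma connect_ind (e : rel V) (x : V) (P : V -> Prop) :
  P x -> (forall u w, connect e x u -> P u -> e u w -> P w) ->
  forall y, connect e x y -> P y.
Proof.
move=> Px step y /connectP [q pq ->].
suff: forall u, connect e x u -> P u -> path e u q -> P (last u q).
  by apply; rewrite ?connect0.
elim: q {pq} => [|w q IH] u cu Pu //= /andP [euw pw].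
apply: IH => //; last exact: step euw.
exact: connect_trans cu (connect1 euw).
Qed.

Lemma cycle_two_neighbours (e : rel V) (c : seq V) x :
  cycle e c -> uniq c -> 3 <= size c -> x \in c ->
  exists y w, [/\ y \in c, w \in c, y != w, e x y & e w x].
Proof.
move=> cyc uc sc xc; case: (rot_to xc) => i s def_c.
have := rot_cycle i e c; rewrite def_c cyc /= rcons_path => /andP [xs lx].
have := rot_uniq i c; rewrite def_c uc /= => /andP [xNs us].
have mem_c y : y \in s -> y \in c by move=> ys; rewrite -(mem_rot i) def_c inE ys orbT.
move: sc xs lx us mem_c; rewrite -(size_rot i) def_c.
case: s {xNs def_c} => [|y [|z t]] //= _ /andP [exy _] elx /andP [yNt _] mem_c.
exists y, (last z t); split=> //.
- by rewrite mem_c // inE eqxx.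
- by rewrite mem_c // inE mem_last orbT.
- by apply: contraNneq yNt => ->; rewrite mem_last.
Qed.

End Paths.

Section Induced.
Variables (V : finType) (G : multigraph V).
Implicit Types (A S : {set V}) (u w x : V).

Lemma adj_in_sym S : symmetric (adj_in G S).
Proof. by move=> u w; rewrite /adj_in mult_sym andbCA. Qed.

Lemma adj_in_irr S u : adj_in G S u u = false.
Proof. by rewrite /adj_in mult_loopless !andbF. Qed.

Lemma sub_adj_in A S : A \subset S -> subrel (adj_in G A) (adj_in G S).
Proof. by move=> /subsetP sAS u w /and3P [uA wA m]; rewrite /adj_in !sAS. Qed.

Lemma adj_in_subset A S : A \subset S -> {in A &, adj_in G A =2 adj_in G S}.
Proof. by move=> /subsetP sAS u w uA wA; rewrite /adj_in uA wA !sAS. Qed.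

Lemma component_subset A S x : A \subset S -> component G A x \subset component G S x.
Proof.
move=> sAS; apply/subsetP => y; rewrite !inE.
by apply: connect_sub => u w /(sub_adj_in sAS)/connect1.
Qed.

Lemma component_sub S x : x \in S -> component G S x \subset S.
Proof.
move=> xS; apply/subsetP => y; rewrite inE; move: y.
by apply: connect_ind => // u w _ _ /and3P [].
Qed.

End Induced.

Section Restriction.
Variable V : finType.
Implicit Types (C : {set V}) (e : rel V).

Lemma proper_interval_sub C C' e e' :
  C' \subset C -> {in C' &, e' =2 e} -> proper_interval C e -> proper_interval C' e'.
Proof.
move=> /subsetP sC' ee' [l [r [lr [adj nest]]]]; exists l, r; split; [|split].
- by move=> v /sC'; apply: lr.
- by move=> u v uC vC uv; rewrite ee' //; apply: adj => //; apply: sC'.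
- by move=> u v /sC' uC /sC' vC; apply: nest.
Qed.

Lemma acyclic_on_sub C C' e e' :
  C' \subset C -> {in C' &, subrel e' e} -> acyclic_on C e -> acyclic_on C' e'.
Proof.
move=> /subsetP sC' ee' acC [c [cC' uc sc cc]]; apply: acC; exists c; split=> //.
- by apply/allP => x /(allP cC') /sC'.
- exact: sub_in_cycle cC' cc.
Qed.

Lemma acyclic_on_small C e : #|C| <= 2 -> acyclic_on C e.
Proof.
move=> C2 [c [cC uc sc _]].
have : size c <= #|C| by rewrite -(card_uniqP uc); apply/subset_leq_card/subsetP/allP.
by move: C2; lia.
Qed.

Lemma good_in_sub (G : multigraph V) (A S : {set V}) :
  good_in G S -> A \subset S -> good_in G A.
Proof.
move=> [simS compS] sAS; split=> [u w uA wA|x xA].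
  by apply: simS; apply: (subsetP sAS).
have sCx := component_subset G x sAS; have sCA := component_sub G xA.
have eqC : {in component G A x &, adj_in G A =2 adj_in G S}.
  by move=> u w uC wC; rewrite (adj_in_subset G sAS) ?(subsetP sCA).
case: (compS x (subsetP sAS x xA)) => [PI|AC]; [left|right].
- exact: proper_interval_sub sCx eqC PI.
- by apply: acyclic_on_sub sCx _ AC => u w uC wC; rewrite eqC.
Qed.

End Restriction.

Section IntervalModels.
Variable V : finType.
Implicit Types (C Z : {set V}) (e : rel V) (l r : V -> R).
Local Open Scope R_scope.

Definition properly_nested l r (u w : V) : Prop :=
  l w <= l u /\ r u <= r w /\ (l w < l u \/ r u < r w).

Definition interval_model C e l r : Prop :=
  (forall v, v \in C -> l v <= r v) /\
  (forall u v, u \in C -> v \in C -> u != v -> (e u v <-> l u <= r v /\ l v <= r u)) /\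
  (forall u v, u \in C -> v \in C -> ~ properly_nested l r u v).

Lemma proper_intervalP C e : proper_interval C e <-> exists l r, interval_model C e l r.
Proof. by []. Qed.

Lemma interval_model_opp C e l r :
  interval_model C e l r -> interval_model C e (fun v => - r v) (fun v => - l v).
Proof.
move=> [lr [adj nest]]; split; [|split].
- by move=> v /lr; lra.
- by move=> u v uC vC uv; rewrite adj //; lra.
- by move=> u v uC vC [? [? ?]]; apply: (nest u v uC vC); red; lra.
Qed.

Lemma interval_model_comp C e l r (phi : R -> R) :
  {homo phi : s t / s < t} -> interval_model C e l r ->
  interval_model C e (phi \o l) (phi \o r).
Proof.
move=> phi_lt [lr [adj nest]].
have phi_le s t : phi s <= phi t <-> s <= t.
  split=> [|st]; first by case: (Rle_lt_dec s t) => // /phi_lt; lra.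
  by case: (Rle_lt_or_eq_dec _ _ st) => [/phi_lt|->]; lra.
have phi_lt' s t : phi s < phi t <-> s < t.
  by split=> [|/phi_lt //]; case: (Rlt_le_dec s t) => // /phi_le; lra.
split; [|split] => /=.
- by move=> v /lr /phi_le.
- by move=> u v uC vC uv; rewrite adj // !phi_le.
- by move=> u v uC vC; rewrite /properly_nested /= !phi_le !phi_lt'; apply: nest.
Qed.

Lemma interval_model_lt C e l r u w : interval_model C e l r ->
  u \in C -> w \in C -> l u < l w -> r u < r w.
Proof.
move=> [_ [_ nest]] uC wC luw; have := nest w u wC uC.
by rewrite /properly_nested; case: (Rlt_le_dec (r u) (r w)) => //; lra.
Qed.

Lemma interval_model_eq C e l r u w : interval_model C e l r ->
  u \in C -> w \in C -> l u = l w -> r u = r w.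
Proof.
move=> [_ [_ nest]] uC wC luw; have := nest w u wC uC; have := nest u w uC wC.
by rewrite /properly_nested; case: (Rtotal_order (r u) (r w)) => [|[|]] //; lra.
Qed.

Lemma interval_model_private C e l r v : interval_model C e l r -> v \in C ->
  (forall u, u \in C -> u != v -> e u v -> l v < l u) ->
  forall u, u \in C -> u != v -> r u < l v \/ l v < l u.
Proof.
move=> [lr [adj _]] vC vmin u uC uv.
case: (Rlt_le_dec (r u) (l v)) => [|lvru]; [by left | right].
case: (Rlt_le_dec (l v) (l u)) => // luv; apply: vmin => //.
by apply/(adj u v uC vC uv); have := lr v vC; lra.
Qed.

Lemma interval_model_gap C e l r v (w : R) :
  interval_model C e l r -> v \in C -> 0 <= w ->
  (forall u, u \in C -> u != v -> r u < l v \/ l v < l u) ->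
  exists l' r', [/\ interval_model C e l' r', l' v = l v, r' v = r v &
    forall u, u \in C -> u != v -> r' u < l v - w \/ l v < l' u].
Proof.
move=> M vC w0 free.
pose phi t := if Rlt_dec t (l v) then t - w else t.
have phi_lt : {homo phi : s t / s < t}.
  by move=> s t st; rewrite /phi; do 2 case: Rlt_dec => /=; lra.
have [lr _] := M; have lvr := lr v vC.
exists (phi \o l), (phi \o r); split=> /=.
- exact: interval_model_comp.
- by rewrite /phi; case: Rlt_dec => /=; lra.
- by rewrite /phi; case: Rlt_dec => /=; lra.
- move=> u uC uv; rewrite /phi.
  by case: (free u uC uv) => h; do 2 case: Rlt_dec => /=; lra.
Qed.

Lemma INR_leE (i j : nat) : INR i <= INR j <-> (i <= j)%N.
Proof. by split=> [/INR_le/leP | /leP/le_INR]. Qed.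

Lemma INR_le_succE (i j : nat) : INR i <= INR j + 1 <-> (i <= j.+1)%N.
Proof. by rewrite -S_INR INR_leE. Qed.

(* The path is drawn as the unit intervals [l v - n z - 1, l v - n z] in the gap. *)
Lemma proper_interval_attach_path C Z e e' l r v (n : V -> nat) (K : nat) :
  interval_model C e l r -> v \in C -> l v < r v ->
  (forall u, u \in C -> u != v -> r u < l v - INR K \/ l v < l u) ->
  (forall z, z \in Z -> (n z < K)%N) -> {in Z &, injective n} ->
  [disjoint C & Z] -> symmetric e' -> {in C &, e' =2 e} ->
  (forall z u, z \in Z -> u \in C -> e' z u = (u == v) && (n z == 0)%N) ->
  (forall z z', z \in Z -> z' \in Z -> z != z' ->
     e' z z' = (n z' == (n z).+1) || (n z == (n z').+1)) ->
  proper_interval (C :|: Z) e'.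
Proof.
move=> [lr [adj nest]] vC lvr gap nK ninj dCZ e'sym e'C e'CZ e'Z.
pose l' u := if u \in Z then l v - INR (n u) - 1 else l u.
pose r' u := if u \in Z then l v - INR (n u) else r u.
have CnZ u : u \in C -> u \notin Z by move=> uC; rewrite (disjointFr dCZ uC).
have l'C u : u \in C -> l' u = l u by move=> /CnZ uZ; rewrite /l' (negbTE uZ).
have r'C u : u \in C -> r' u = r u by move=> /CnZ uZ; rewrite /r' (negbTE uZ).
have l'Z z : z \in Z -> l' z = l v - INR (n z) - 1 by move=> zZ; rewrite /l' zZ.
have r'Z z : z \in Z -> r' z = l v - INR (n z) by move=> zZ; rewrite /r' zZ.
have nZ z : z \in Z -> 0 <= INR (n z) /\ INR (n z) + 1 <= INR K.
  by move=> /nK nzK; split; [exact: pos_INR | rewrite -S_INR; apply/INR_leE].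
have mixed z u : z \in Z -> u \in C ->
    [/\ e' z u <-> l' z <= r' u /\ l' u <= r' z, ~ properly_nested l' r' u z
      & ~ properly_nested l' r' z u].
  move=> zZ uC; rewrite /properly_nested e'CZ //.
  rewrite (l'Z z) // (r'Z z) // (l'C u) // (r'C u) //.
  have [n0 nzK] := nZ z zZ; have := lr u uC.
  case: eqVneq => [->|uv] /= lur; last first.
    by have := gap u uC uv; split; [split=> // ?; lra | lra | lra].
  split; [split=> [/eqP ->|[_ nz0]] | lra | lra]; first by rewrite /=; lra.
  have /INR_leE : INR (n z) <= INR 0 by rewrite /=; lra.
  by rewrite leqn0.
exists l', r'; split; [|split].
- move=> u; rewrite in_setU => /orP [uC|uZ]; first by rewrite l'C ?r'C //; apply: lr.
  by rewrite l'Z ?r'Z //; lra.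
- move=> u w; rewrite !in_setU => /orP [uC|uZ] /orP [wC|wZ] uw.
  + by rewrite e'C // !l'C // !r'C //; apply: adj.
  + by rewrite e'sym; have [-> _ _] := mixed w u wZ uC; tauto.
  + by have [-> _ _] := mixed u w uZ wC.
  + have nuw : n u != n w by apply: contra_neq uw; apply: ninj.
    rewrite e'Z // !l'Z ?r'Z //.
    split=> [/orP [/eqP ->|/eqP ->] | [h1 h2]]; try by rewrite S_INR; split; lra.
    have /INR_le_succE : INR (n w) <= INR (n u) + 1 by lra.
    have /INR_le_succE : INR (n u) <= INR (n w) + 1 by lra.
    by move: nuw; lia.
- move=> u w; rewrite !in_setU => /orP [uC|uZ] /orP [wC|wZ].
  + by rewrite /properly_nested !l'C ?r'C //; apply: nest.
  + by have [_ ? _] := mixed w u wZ uC.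
  + by have [_ _ ?] := mixed u w uZ wC.
  + by rewrite /properly_nested !l'Z ?r'Z //; lra.
Qed.

End IntervalModels.

Lemma mult_of_deg_le_card (V : finType) (G : multigraph V) (v : V) (A : {set V}) :
  (forall a, a \in A -> 0 < mult G v a) -> deg G v <= #|A| ->
  forall y, mult G v y = (y \in A).
Proof.
move=> multA degA y.
have le_mult u : (u \in A : nat) <= mult G v u by case: (boolP (u \in A)) => // /multA.
have sumA : \sum_(u | predT u) (u \in A : nat) = #|A|
  by rewrite -(sum1_card (mem A)) [RHS]big_mkcond.
have [sum_le sum_eq] := leqif_sum (fun u (_ : predT u) => leqif_eq (le_mult u)).
have /forallP/(_ y)/eqP <- // : [forall u, (u \in A : nat) == mult G v u].
by rewrite -sum_eq eqn_leq sum_le sumA.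
Qed.

Lemma mem_nth_drop (T : eqType) (x0 : T) (s : seq T) n i : uniq s -> i < size s ->
  (nth x0 s i \in drop n s) = (n <= i).
Proof.
move=> us isz; case: leqP => [ni|lt_in].
  by rewrite -(subnKC ni) -nth_drop mem_nth // size_drop; lia.
have : uniq (take n s ++ drop n s) by rewrite cat_take_drop.
rewrite cat_uniq => /and3P [_ /hasPn notin_take _].
apply/negP => /notin_take; rewrite -(nth_take x0 lt_in) mem_nth // size_take.
by case: ifP.
Qed.

Section DegreeTwoTail.
Variables (V : finType) (G : multigraph V) (p : seq V) (x0 : V).
Hypothesis p_tail : deg2_tail G p.
Local Notation vtx i := (nth x0 p i).

Lemma tail_uniq : uniq p.
Proof. by case: p_tail => v1 [vl [mid [_ [up _]]]]. Qed.

Lemma tail_adj i : i.+1 < size p -> 0 < mult G (vtx i) (vtx i.+1).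
Proof. by case: p_tail => v1 [vl [mid [-> [_ [pp _]]]]] hi; apply: (pathP x0 pp). Qed.

Lemma tail_deg i : 0 < i < size p -> deg G (vtx i) = if i.+1 < size p then 2 else 1.
Proof.
case: p_tail => v1 [vl [mid [-> [_ [_ [mid2 [_ dl]]]]]]].
case: i => [//|i] /andP [_]; rewrite /= size_rcons !ltnS nth_rcons.
case: ltngtP => // i_mid _.
by rewrite (eqP (all_nthP x0 mid2 i i_mid)).
Qed.

Lemma tail_mult i y : 0 < i < size p ->
  mult G (vtx i) y = (y == vtx i.-1) || (i.+1 < size p) && (y == vtx i.+1).
Proof.
move=> hi; have [i0 isz] := andP hi.
pose A := [set u | (u == vtx i.-1) || (i.+1 < size p) && (u == vtx i.+1)].
rewrite (mult_of_deg_le_card (A := A)) ?inE // => [a|].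
  rewrite inE => /orP [/eqP -> | /andP [hs /eqP ->]]; last exact: tail_adj.
  by rewrite mult_sym -{2}(prednK i0); apply: tail_adj; rewrite prednK.
rewrite tail_deg //; case: ifP => hs.
  have -> : A = [set vtx i.-1; vtx i.+1] by apply/setP => u; rewrite !inE hs.
  have ne : (i.-1 == i.+1) = false by apply/eqP; lia.
  by rewrite cards2 nth_uniq ?tail_uniq ?ne // (leq_ltn_trans (leq_pred i)).
have -> : A = [set vtx i.-1] by apply/setP => u; rewrite !inE hs andFb orbF.
by rewrite cards1.
Qed.

Lemma tail_notin_cycle (e : rel V) c i : (forall u w, e u w -> 0 < mult G u w) ->
  cycle e c -> uniq c -> 3 <= size c -> 0 < i < size p -> vtx i \notin c.
Proof.
move=> eG cc uc sc hi; apply/negP => ic.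
(* A cycle through [vtx j] uses both of its neighbours, so it goes on to [vtx j.+1],
   and so on up to the end of the tail, where it gets stuck. *)
have next_in j : 0 < j < size p -> vtx j \in c -> j.+1 < size p /\ vtx j.+1 \in c.
  move=> hj jc; have [y [w [yc wc yw /eG jy /eG wj]]] := cycle_two_neighbours cc uc sc jc.
  rewrite mult_sym tail_mult // lt0b in wj; rewrite tail_mult // lt0b in jy.
  case/orP: jy => [/eqP ey | /andP [hs /eqP ey]]; last by rewrite -ey.
  case/orP: wj => [/eqP ew | /andP [hs /eqP ew]]; last by rewrite -ew.
  by move: yw; rewrite ey ew eqxx.
suff: forall k, i + k < size p /\ vtx (i + k) \in c by move=> /(_ (size p)) []; lia.
elim=> [|k [hk kc]]; first by rewrite addn0; split=> //; lia.
by rewrite addnS; apply: next_in => //; lia.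
Qed.

Hypothesis size_p : 3 <= size p.
Local Notation Z := [set x in drop 2 p].

Lemma mem_tail_Z i : i < size p -> (vtx i \in Z) = (1 < i).
Proof. by move=> isz; rewrite inE mem_nth_drop // tail_uniq. Qed.

Lemma tail_index z : z \in Z ->
  [/\ vtx (index z p) = z, 1 < index z p & index z p < size p].
Proof.
move=> zZ; have zp : z \in p by move: zZ; rewrite inE => /mem_drop.
have isz : index z p < size p by rewrite index_mem.
by rewrite -(mem_tail_Z isz) nth_index.
Qed.

Lemma eq_nth_index y k : y \in p -> k < size p -> (y == vtx k) = (index y p == k).
Proof. by move=> yp ksz; rewrite -{1}(nth_index x0 yp) nth_uniq ?index_mem ?tail_uniq. Qed.

Lemma mult_Z_out z w : z \in Z -> w \notin Z ->
  (0 < mult G z w) = (index z p == 2) && (w == vtx 1).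
Proof.
move=> zZ wZ; have [ez j1 jsz] := tail_index zZ.
rewrite -{1}ez tail_mult ?lt0b; last lia.
have -> : ((index z p).+1 < size p) && (w == vtx (index z p).+1) = false.
  by apply/negbTE/negP => /andP [hs /eqP ew]; move: wZ; rewrite ew mem_tail_Z //; lia.
rewrite orbF; case: (eqVneq (index z p) 2) => [-> //|j2].
by apply/negbTE; apply: contraNneq wZ => ->; rewrite mem_tail_Z; lia.
Qed.

Lemma mult_Z_Z z z' : z \in Z -> z' \in Z ->
  (0 < mult G z z') = (index z' p == (index z p).+1) || (index z p == (index z' p).+1).
Proof.
move=> zZ z'Z; have [ez j1 jsz] := tail_index zZ; have [_ j1' jsz'] := tail_index z'Z.
have z'p : z' \in p by rewrite -index_mem.
rewrite -{1}ez tail_mult ?lt0b; last lia.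
case: ltnP => hs /=; rewrite !eq_nth_index //; lia.
Qed.

Variable X : {set V}.
Hypotheses (XZ : X \subset ~: Z) (goodS : good_in G (~: Z :\: X)).
Local Notation S := (~: Z :\: X).
Local Notation T := ([set: V] :\: X).
Local Notation v1 := (vtx 0).
Local Notation v2 := (vtx 1).
Local Notation C := (component G S v2).

Lemma inS u : (u \in S) = (u \notin Z) && (u \notin X).
Proof. by rewrite !inE andbC. Qed.

Lemma inT u : (u \in T) = (u \notin X).
Proof. by rewrite !inE andbT. Qed.

Lemma Z_sub_T z : z \in Z -> z \in T.
Proof. by move=> zZ; rewrite inT; apply: contraL zZ => /(subsetP XZ); rewrite in_setC. Qed.

Lemma S_sub_T : S \subset T.
Proof. by apply/subsetP => u; rewrite inS inT => /andP []. Qed.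

Lemma adj_in_v2 u : adj_in G S u v2 = [&& u == v1, v1 \in S & v2 \in S].
Proof.
rewrite /adj_in mult_sym tail_mult ?lt0b /=; last lia.
case: (eqVneq u v1) => [->|_]; first by rewrite andbT.
case: (eqVneq u (vtx 2)) => [->|_]; last by rewrite !andbF.
by rewrite inS mem_tail_Z.
Qed.

Lemma simple_T : simple_in G T.
Proof.
have simple_Z u w : u \in Z -> mult G u w <= 1.
  by move=> /tail_index [ez j1 jsz]; rewrite -{1}ez tail_mult ?leq_b1 //; lia.
move=> u w uT wT; case: (boolP (u \in Z)) => [/simple_Z //|uZ].
case: (boolP (w \in Z)) => [/simple_Z|wZ]; first by rewrite mult_sym.
by apply: goodS.1; rewrite inS ?uZ ?wZ -inT.
Qed.

Let collapse u := if u \in Z then v2 else u.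

Lemma connect_collapse x y :
  connect (adj_in G T) x y -> connect (adj_in G S) (collapse x) (collapse y).
Proof.
move: y; apply: connect_ind => [|u w _ xu /and3P [uT wT m]]; first exact: connect0.
apply: (connect_trans xu); rewrite /collapse.
case: (boolP (u \in Z)) => uZ; case: (boolP (w \in Z)) => wZ.
- exact: connect0.
- by move: m; rewrite mult_Z_out // => /andP [_ /eqP ->].
- by move: m; rewrite mult_sym mult_Z_out // => /andP [_ /eqP ->].
- by apply: connect1; rewrite /adj_in m !inS uZ wZ -!inT uT wT.
Qed.

Lemma cycle_T_notin_Z c y : cycle (adj_in G T) c -> uniq c -> 3 <= size c ->
  y \in c -> y \notin Z.
Proof.
move=> cc uc sc yc; apply: contraL yc => /tail_index [ez j1 jsz]; rewrite -ez.
by apply: tail_notin_cycle cc uc sc _ => [u w /and3P []|]; lia.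
Qed.

Lemma component_T_tail x z : z \in Z -> connect (adj_in G T) x z ->
  component G T x \subset C :|: Z.
Proof.
move=> zZ xz; apply/subsetP => y; rewrite inE => /connect_collapse xy.
have v2x : connect (adj_in G S) v2 (collapse x).
  rewrite (sym_connect_sym (adj_in_sym G S)).
  by have := connect_collapse xz; rewrite /collapse zZ.
have := connect_trans v2x xy; rewrite /collapse in_setU.
by case: (boolP (y \in Z)) => [yZ _|_ v2y]; apply/orP; [right|left; rewrite inE].
Qed.

Lemma acyclic_component_T x z : x \in T -> z \in Z -> connect (adj_in G T) x z ->
  acyclic_on C (adj_in G S) -> acyclic_on (component G T x) (adj_in G T).
Proof.
move=> xT zZ xz acC [c [cK uc sc cc]]; apply: acC; exists c.
have cZ y : y \in c -> y \notin Z by apply: cycle_T_notin_Z.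
have cS : all (fun y => y \in S) c.
  apply/allP => y yc; rewrite inS cZ //= -inT.
  exact: (subsetP (component_sub G xT)) (allP cK y yc).
split=> //.
- apply/allP => y yc; have := subsetP (component_T_tail zZ xz) y (allP cK y yc).
  by rewrite in_setU (negbTE (cZ y yc)) orbF.
- by apply: (sub_in_cycle _ cS cc) => u w uS wS; rewrite (adj_in_subset G S_sub_T).
Qed.

Lemma v2_in_C : v2 \in C.
Proof. by rewrite inE connect0. Qed.

Lemma v1_in_C : v1 \in S -> v2 \in S -> v1 \in C.
Proof. by move=> v1S v2S; rewrite inE connect1 // adj_in_sym adj_in_v2 eqxx v1S v2S. Qed.

Lemma component_v2_trivial : ~~ ((v1 \in S) && (v2 \in S)) -> C \subset [set v2].
Proof.
move=> nS; apply/subsetP => y; rewrite !inE; move: y.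
apply: connect_ind => [|u w _ /eqP ->]; first exact: eqxx.
by rewrite adj_in_sym adj_in_v2 => /and3P [_ v1S v2S]; move: nS; rewrite v1S v2S.
Qed.

Lemma component_v2_twins l r : interval_model C (adj_in G S) l r ->
  v1 \in S -> v2 \in S -> l v1 = l v2 -> C \subset [set v1; v2].
Proof.
move=> M v1S v2S l12; have r12 := interval_model_eq M (v1_in_C v1S v2S) v2_in_C l12.
have [_ [adj _]] := M.
apply/subsetP => y; rewrite inE; move: y.
apply: connect_ind => [|u w v2u uP uw]; first by rewrite !inE eqxx orbT.
have uC : u \in C by rewrite inE.
have wC : w \in C by rewrite inE (connect_trans v2u (connect1 uw)).
have [->|wv2] := eqVneq w v2; first by rewrite !inE eqxx orbT.
have uw' : u != w by apply: contraTneq uw => ->; rewrite adj_in_irr.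
have [luw lwu] := (adj u w uC wC uw').1 uw.
have : adj_in G S w v2.
  apply/(adj w v2 wC v2_in_C wv2).
  by move: uP; rewrite !inE => /orP [] /eqP eu; rewrite eu in luw lwu; split; lra.
by rewrite adj_in_v2 => /and3P [/eqP -> _ _]; rewrite !inE eqxx.
Qed.

Lemma proper_interval_extend l r : interval_model C (adj_in G S) l r ->
  v1 \in S -> v2 \in S -> Rlt (l v2) (l v1) -> proper_interval (C :|: Z) (adj_in G T).
Proof.
move=> M v1S v2S l21; have v1C := v1_in_C v1S v2S.
have CS : C \subset S := component_sub G v2S.
have [lr [adj _]] := M.
have lr2 : Rlt (l v2) (r v2).
  have v12 : v1 != v2 by rewrite nth_uniq ?tail_uniq ?(leq_trans _ size_p).
  have a12 : adj_in G S v1 v2 by rewrite adj_in_v2 eqxx v1S v2S.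
  by have [] := (adj v1 v2 v1C v2_in_C v12).1 a12; lra.
have v2_min u : u \in C -> u != v2 -> adj_in G S u v2 -> Rlt (l v2) (l u).
  by move=> _ _; rewrite adj_in_v2 => /and3P [/eqP -> _ _].
have free := interval_model_private M v2_in_C v2_min.
have [l' [r' [M' l'2 r'2 gap]]] := interval_model_gap M v2_in_C (pos_INR (size p)) free.
rewrite -l'2 in gap; rewrite -l'2 -r'2 in lr2.
apply: (proper_interval_attach_path (n := fun z => index z p - 2) M' v2_in_C lr2 gap).
- by move=> z /tail_index [_ j1 jsz]; lia.
- move=> z z' /tail_index [ez j1 _] /tail_index [ez' j1' _] /= e.
  by rewrite -ez -ez'; congr nth; lia.
- by rewrite disjoint_subset; apply/subsetP => y /(subsetP CS); rewrite inS => /andP [].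
- exact: adj_in_sym.
- by move=> u w uC wC; rewrite (adj_in_subset G S_sub_T) ?(subsetP CS).
- move=> z u zZ uC; have uS := subsetP CS u uC; move: (uS); rewrite inS => /andP [uZ _].
  have [_ j1 _] := tail_index zZ.
  rewrite /adj_in Z_sub_T // (subsetP S_sub_T) // mult_Z_out //= andbC.
  by congr (_ && _); apply/eqP/eqP; lia.
- move=> z z' zZ z'Z _; have [_ j1 _] := tail_index zZ; have [_ j1' _] := tail_index z'Z.
  by rewrite /adj_in !Z_sub_T // mult_Z_Z //; lia.
Qed.

Lemma component_T_off_tail x : x \in T ->
  (forall y, connect (adj_in G T) x y -> y \notin Z) -> component G T x = component G S x.
Proof.
move=> xT offZ; apply/eqP; rewrite eqEsubset (component_subset G x S_sub_T) andbT.
apply/subsetP => y; rewrite !inE; move: y.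
apply: connect_ind => [|u w xu xu' uw]; first exact: connect0.
have xw := connect_trans xu (connect1 uw); move: uw => /and3P [uT wT m].
by apply: (connect_trans xu'); apply: connect1; rewrite /adj_in m !inS !offZ // -!inT uT wT.
Qed.

Lemma good_component_off_tail x : x \in T ->
  (forall y, connect (adj_in G T) x y -> y \notin Z) ->
  proper_interval (component G T x) (adj_in G T) \/
  acyclic_on (component G T x) (adj_in G T).
Proof.
move=> xT offZ; have xS : x \in S by rewrite inS -inT xT offZ ?connect0.
have eqK : {in component G S x &, adj_in G T =2 adj_in G S}.
  by move=> u w uK wK; rewrite (adj_in_subset G S_sub_T) ?(subsetP (component_sub G xS)).
rewrite (component_T_off_tail xT offZ); case: (goodS.2 x xS) => [PI|AC]; [left|right].
- exact: proper_interval_sub (subxx _) eqK PI.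
- by apply: acyclic_on_sub (subxx _) _ AC => u w uK wK; rewrite eqK.
Qed.

Lemma good_component_on_tail x z : x \in T -> z \in Z -> connect (adj_in G T) x z ->
  proper_interval (component G T x) (adj_in G T) \/
  acyclic_on (component G T x) (adj_in G T).
Proof.
move=> xT zZ xz; have acyclic_K := acyclic_component_T xT zZ xz.
have sub := component_T_tail zZ xz.
have [/andP [v1S v2S] | nS] := boolP ((v1 \in S) && (v2 \in S)); last first.
  right; apply/acyclic_K/acyclic_on_small.
  by rewrite (leq_trans (subset_leq_card (component_v2_trivial nS))) ?cards1.
case: (goodS.2 v2 v2S) => [/proper_intervalP [l [r M]] | acC]; last by right; apply: acyclic_K.
have [l21|[l12|l12]] := Rtotal_order (l v2) (l v1).
- by left; apply: proper_interval_sub sub _ (proper_interval_extend M v1S v2S l21).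
- right; apply/acyclic_K/acyclic_on_small.
  have := subset_leq_card (component_v2_twins M v1S v2S (esym l12)).
  by rewrite cards2 => /leq_trans; apply; case: (_ != _).
- left; have M' := interval_model_opp M.
  apply: proper_interval_sub sub _ (proper_interval_extend M' v1S v2S _) => //.
  by have := interval_model_lt M (v1_in_C v1S v2S) v2_in_C l12; lra.
Qed.

Lemma good_in_T : good_in G T.
Proof.
split=> [|x xT]; first exact: simple_T.
have [/exists_inP [z zZ xz] | /exists_inP offZ] :=
  boolP [exists z in Z, connect (adj_in G T) x z].
  exact: good_component_on_tail xT zZ xz.
apply: good_component_off_tail => // y xy.
by apply/negP => yZ; apply: offZ; exists y.
Qed.

End DegreeTwoTail.

Theorem lemma16 (V : finType) (G : multigraph V) (k : nat) (p : seq V) :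
  deg2_tail G p -> 3 <= size p ->
  (pitvd_yes G [set: V] k <->
   pitvd_yes G (~: [set x in drop 2 p]) k).
Proof.
move=> p_tail size_p; have [x0 _] := p_tail.
split=> [[X [_ cardX goodX]] | [X [XZ cardX goodX]]].
- exists (X :&: ~: [set x in drop 2 p]); split.
  + exact: subsetIr.
  + by rewrite (leq_trans _ cardX) // subset_leq_card // subsetIl.
  + apply: good_in_sub goodX _; apply/subsetP => y; rewrite !inE.
    by case: (y \in X) => /=; rewrite ?andNb.
- by exists X; split; [exact: subsetT | | exact: (good_in_T x0 p_tail size_p XZ goodX)].
Qed.
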